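(* Let $(V,\operatorname{val}_V)$ be a valued vector space of finite dimension $r$ over a valued field $(k,\nu)$ with value group $\mathbb{Z}$, such that $\nu\colon k\setminus\{0\}\to\mathbb{Z}$ is surjective, and fix $x\in k$ with $\nu(x)=1$. Suppose there exists a discriminant function $\operatorname{Disc}\colon\mathbb{B}_V\to\mathbb{Z}$ (with respect to this $x$). Consider the following procedure, applied to a $k$-basis $B_1,\dots,B_r$ of $V$: for $d=1,\dots,r$ in turn, first replace $B_d$ by $x^{-\operatorname{val}_V(B_d)}B_d$; then, as long as there exist $\alpha_1,\dots,\alpha_{d-1}\in k$ with $\operatorname{val}_V(\alpha_1B_1+\cdots+\alpha_{d-1}B_{d-1}+B_d)>0$, choose such $\alpha_1,\dots,\alpha_{d-1}$ and replace $B_d$ by $x^{-1}(\alpha_1B_1+\cdots+\alpha_{d-1}B_{d-1}+B_d)$. Finally return $B_1,\dots,B_r$. Then this procedure terminates.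
   Context: A valuation $\nu$ on $k$ and a value function $\operatorname{val}_V$ on $V$ are as usual: $\nu(a)=\infty\iff a=0$, $\nu(ab)=\nu(a)+\nu(b)$, $\nu(a+b)\ge\min(\nu(a),\nu(b))$; $\operatorname{val}_V(v)=\infty\iff v=0$, $\operatorname{val}_V(av)=\nu(a)+\operatorname{val}_V(v)$, $\operatorname{val}_V(v+w)\ge\min(\operatorname{val}_V(v),\operatorname{val}_V(w))$. An element $v$ is integral if $\operatorname{val}_V(v)\ge0$. $\mathbb{B}_V$ denotes the set of all (ordered) $k$-bases of $V$. A map $\operatorname{Disc}\colon\mathbb{B}_V\to\mathbb{Z}$ is a discriminant function on $V$ if for every basis $B_1,\dots,B_r$ of $V$: (i) $\gamma:=\operatorname{Disc}(\{B_1,\dots,B_r\})\ge0$ whenever all $B_i$ are integral; (ii) whenever there are $d\le r$ and $\alpha_1,\dots,\alpha_{d-1}\in k$ such that $\tilde B_d:=\alpha_1B_1+\cdots+\alpha_{d-1}B_{d-1}+B_d$ satisfies $\operatorname{val}_V(\tilde B_d)>\min_{i=1}^d\operatorname{val}_V(B_i)$, then $\operatorname{Disc}(\{B_1,\dots,B_{d-1},x^{-1}\tilde B_d,B_{d+1},\dots,B_r\})<\gamma$. *)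

From HB Require Import structures.
From mathcomp Require Import all_boot all_order all_algebra.
Set Implicit Arguments. Unset Strict Implicit. Unset Printing Implicit Defensive.
Import Order.TTheory GRing.Theory Num.Theory.
Local Open Scope ring_scope.

(* Valuations with values in Z ∪ {∞} are encoded as maps to [int];
   the value at 0 (which is ∞) is never used: all axioms are stated for
   nonzero arguments, and comparisons with possibly-zero vectors go through
   [vgt] / [integral] below, which treat 0 as having value ∞. *)

Section Defs.
Variables (k : fieldType) (V : vectType k).

Definition is_valuation (nu : k -> int) : Prop :=
  (forall a b : k, a != 0 -> b != 0 -> nu (a * b) = nu a + nu b) /\
  (forall a b : k, a != 0 -> b != 0 -> a + b != 0 ->
     Num.min (nu a) (nu b) <= nu (a + b)).

Definition is_value_function (nu : k -> int) (val : V -> int) : Prop :=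
  (forall (a : k) (v : V), a != 0 -> v != 0 -> val (a *: v) = nu a + val v) /\
  (forall v w : V, v != 0 -> w != 0 -> v + w != 0 ->
     Num.min (val v) (val w) <= val (v + w)).

Definition vgt (val : V -> int) (w : V) (c : int) : bool :=
  (w == 0) || (c < val w).

Definition integral (val : V -> int) (w : V) : bool :=
  (w == 0) || (0 <= val w).

(* alpha_1 B_1 + ... + alpha_{d-1} B_{d-1} + B_d  (0-indexed: indices j < d, and d) *)
Definition combo (B : seq V) (d : nat) (alpha : nat -> k) : V :=
  \sum_(j < d) alpha j *: nth 0 B j + nth 0 B d.

(* Disc is a discriminant function on V with respect to x.  Ordered bases
   are sequences B with [basis_of fullv B]; indices are 0-based. *)
Definition is_discriminant (x : k) (val : V -> int) (Disc : seq V -> int) : Prop :=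
  (forall B : seq V, basis_of fullv B -> all (integral val) B -> 0 <= Disc B) /\
  (forall (B : seq V) (d : nat) (alpha : nat -> k),
     basis_of fullv B -> (d < size B)%N ->
     vgt val (combo B d alpha)
         (\big[Num.min/val (nth 0 B d)]_(j < d.+1) val (nth 0 B j)) ->
     Disc (set_nth 0 B d (x^-1 *: combo B d alpha)) < Disc B).

Definition normalize (x : k) (val : V -> int) (B : seq V) (d : nat) : seq V :=
  set_nth 0 B d (x ^ (- val (nth 0 B d)) *: nth 0 B d).

(* The procedure as a nondeterministic transition system.
   A state (d, B) with d < r means: we are in the inner loop of stage d
   (0-indexed), B_d having already been normalized.  The state (r, B) is final. *)
Definition proc_init (r : nat) (x : k) (val : V -> int) (B : seq V) : nat * seq V :=
  (0%N, if (0 < r)%N then normalize x val B 0 else B).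

Inductive proc_step (r : nat) (x : k) (val : V -> int) :
    nat * seq V -> nat * seq V -> Prop :=
  | step_inner (d : nat) (B : seq V) (alpha : nat -> k) :
      (d < r)%N -> vgt val (combo B d alpha) 0 ->
      proc_step r x val (d, B) (d, set_nth 0 B d (x^-1 *: combo B d alpha))
  | step_next (d : nat) (B : seq V) :
      (d < r)%N -> (forall alpha : nat -> k, ~~ vgt val (combo B d alpha) 0) ->
      proc_step r x val (d, B)
        (d.+1, if (d.+1 < r)%N then normalize x val B d.+1 else B).

End Defs.

From HB Require Import structures.
From mathcomp Require Import all_boot all_order all_algebra.
From mathcomp Require Import zify.
Import Order.TTheory GRing.Theory Num.Theory.
Local Open Scope ring_scope.
Set Implicit Arguments. Unset Strict Implicit.

(* During stage d the vectors B_0, ..., B_d stay integral: B_0 keeps value 0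
   forever, and every replacement x^-1 (alpha_1 B_1 + ... + B_d) has value
   >= 0.  Normalizing the vectors after B_d gives an integral basis, whose
   discriminant is therefore a nonnegative integer; an inner step replaces B_d
   by a combination of value > 0 >= val B_0, so this discriminant strictly
   decreases.  Hence (stage, discriminant) descends lexicographically, which
   cannot go on forever. *)

Section Valuation.
Variables (k : fieldType) (nu : k -> int).
Hypothesis nu_val : is_valuation nu.

Lemma valuation1 : nu 1 = 0.
Proof. by have := nu_val.1 1 1 (oner_neq0 _) (oner_neq0 _); rewrite mulr1; lia. Qed.

Lemma valuationV y : y != 0 -> nu y^-1 = - nu y.
Proof.
move=> y_neq0; have := nu_val.1 y y^-1 y_neq0 (invr_neq0 y_neq0).
by rewrite mulfV // valuation1; lia.
Qed.

Lemma valuationXn y n : y != 0 -> nu (y ^+ n) = nu y * n%:Z.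
Proof.
move=> y_neq0; elim: n => [|n IHn]; first by rewrite expr0 valuation1; lia.
by rewrite exprS nu_val.1 ?expf_neq0 // IHn; lia.
Qed.

Lemma valuationXz y z : y != 0 -> nu (y ^ z) = nu y * z.
Proof.
move=> y_neq0; case: z => n; first exact: valuationXn.
rewrite NegzE -exprnN valuationV ?expf_neq0 // valuationXn //; lia.
Qed.

End Valuation.

Section Bases.
Variables (k : fieldType) (V : vectType k).
Implicit Types (U : {vspace V}) (X Y : seq V).

Lemma size_basis_of U X : basis_of U X -> size X = \dim U.
Proof. by move=> X_basis; rewrite (size_basis (X := in_tuple X)). Qed.

Lemma basis_nth_neq0 U X i : basis_of U X -> (i < size X)%N -> nth 0 X i != 0.
Proof. by move=> X_basis lt_i; apply: basis_not0 X_basis (mem_nth 0 lt_i). Qed.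

Lemma memv_span_nth X i : (i < size X)%N -> nth 0 X i \in span X.
Proof. by move=> lt_i; apply/memv_span/mem_nth. Qed.

Lemma memv_span_set_nth X d w : w \in span (set_nth 0 X d w).
Proof.
have := @memv_span_nth (set_nth 0 X d w) d.
by rewrite nth_set_nth /= eqxx size_set_nth leq_max leqnn; apply.
Qed.

Lemma memv_span_set_nth_neq X d w i : (i < size X)%N -> i != d ->
  nth 0 X i \in span (set_nth 0 X d w).
Proof.
move=> lt_i ne_id; have := @memv_span_nth (set_nth 0 X d w) i.
by rewrite nth_set_nth /= (negPf ne_id) size_set_nth leq_max lt_i orbT; apply.
Qed.

Lemma basis_of_span_sub U X Y :
  basis_of U X -> size Y = size X -> (span X <= span Y)%VS -> basis_of U Y.
Proof.
move=> X_basis sizeYX sXY; rewrite basisEdim sizeYX (size_basis_of X_basis) leqnn andbT.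
by case/andP: X_basis => /eqP <- _.
Qed.

Lemma basis_scale_nth U X Y : basis_of U X -> size Y = size X ->
  (forall i, (i < size X)%N -> exists2 c, c != 0 & nth 0 Y i = c *: nth 0 X i) ->
  basis_of U Y.
Proof.
move=> X_basis sizeYX scaled; apply: (basis_of_span_sub X_basis sizeYX).
apply/span_subvP => _ /(nthP 0) [i lt_i <-].
have [c c_neq0 Yi] := scaled i lt_i.
rewrite -(scalerK c_neq0 (nth 0 X i)) -Yi.
by apply/memvZ/memv_span_nth; rewrite sizeYX.
Qed.

Lemma basis_set_nth U X d w : basis_of U X -> (d < size X)%N ->
  nth 0 X d \in span (set_nth 0 X d w) -> basis_of U (set_nth 0 X d w).
Proof.
move=> X_basis lt_d Xd_in; apply: basis_of_span_sub X_basis _ _.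
  by rewrite size_set_nth; apply/maxn_idPr.
apply/span_subvP => _ /(nthP 0) [i lt_i <-].
by have [->|ne_id] := eqVneq i d; last exact: memv_span_set_nth_neq.
Qed.

Lemma basis_set_nth_combo U X d alpha c : basis_of U X -> (d < size X)%N ->
  c != 0 -> basis_of U (set_nth 0 X d (c *: combo X d alpha)).
Proof.
move=> X_basis lt_d c_neq0; apply: basis_set_nth => //.
have -> : nth 0 X d =
    c^-1 *: (c *: combo X d alpha) - \sum_(j < d) alpha j *: nth 0 X j.
  by rewrite scalerK // /combo addrC addKr.
apply: memvB; first exact/memvZ/memv_span_set_nth.
apply: memv_suml => j _; apply/memvZ/memv_span_set_nth_neq.
  exact: ltn_trans (ltn_ord j) lt_d.
by rewrite neq_ltn ltn_ord.
Qed.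

Lemma combo_neq0 U X d alpha : basis_of U X -> (d < size X)%N ->
  combo X d alpha != 0.
Proof.
move=> X_basis lt_d.
have := basis_set_nth_combo alpha X_basis lt_d (oner_neq0 k).
rewrite scale1r => /basis_not0; apply.
have := @mem_nth _ 0 (set_nth 0 X d (combo X d alpha)) d.
by rewrite nth_set_nth /= eqxx size_set_nth leq_max leqnn; apply.
Qed.

End Bases.

Lemma no_bounded_lex_descent (r : nat) (d m : nat -> nat) :
  (forall n, d n < r)%N ->
  (forall n, d n < d n.+1 \/ d n.+1 = d n /\ m n.+1 < m n)%N -> False.
Proof.
move=> d_lt descent.
have stage_bound K : forall n, (r - d n <= K)%N -> False.
  elim: K => [|K IHK] n le_K; first by have := d_lt n; lia.
  suff inner M : forall n, (r - d n <= K.+1)%N -> (m n < M)%N -> False.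
    exact: (inner (m n).+1 n le_K).
  elim: M => [|M IHM] {le_K}n le_K lt_M //.
  case: (descent n) => [lt_d|[eq_d lt_m]]; first by apply: (IHK n.+1); lia.
  by apply: (IHM n.+1); lia.
exact: (stage_bound r 0%N (leq_subr _ _)).
Qed.

Section Procedure.
Variables (k : fieldType) (V : vectType k) (r : nat) (nu : k -> int)
  (val : V -> int) (x : k) (Disc : seq V -> int).
Hypotheses (dimV : \dim (fullv : {vspace V}) = r) (nu_val : is_valuation nu)
  (val_fun : is_value_function nu val) (x_neq0 : x != 0) (nu_x : nu x = 1)
  (Disc_discr : is_discriminant x val Disc).
Implicit Types (B : seq V) (s : nat * seq V).

Lemma size_basis_full B : basis_of fullv B -> size B = r.
Proof. by move/size_basis_of; rewrite dimV. Qed.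

Lemma val_scale_exprz z v : v != 0 -> val (x ^ z *: v) = z + val v.
Proof. by move=> v_neq0; rewrite val_fun.1 ?expfz_neq0 // valuationXz // nu_x mul1r. Qed.

Lemma normalize_basis B i : basis_of fullv B -> (i < size B)%N ->
  basis_of fullv (normalize x val B i).
Proof.
move=> B_basis lt_i; apply: basis_set_nth => //.
rewrite -{1}(scalerK (expfz_neq0 (- val (nth 0 B i)) x_neq0) (nth 0 B i)).
exact/memvZ/memv_span_set_nth.
Qed.

Lemma val_normalize B i : basis_of fullv B -> (i < size B)%N ->
  val (nth 0 (normalize x val B i) i) = 0.
Proof.
move=> B_basis lt_i.
by rewrite nth_set_nth /= eqxx val_scale_exprz ?(basis_nth_neq0 B_basis) // addNr.
Qed.

Definition normalize_tail d B : seq V :=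
  mkseq (fun i => if (i <= d)%N then nth 0 B i
                  else x ^ (- val (nth 0 B i)) *: nth 0 B i) (size B).

Lemma size_normalize_tail d B : size (normalize_tail d B) = size B.
Proof. exact: size_mkseq. Qed.

Lemma nth_normalize_tail_le d B j : (j <= d)%N ->
  nth 0 (normalize_tail d B) j = nth 0 B j.
Proof.
move=> le_jd; have [lt_j|ge_j] := ltnP j (size B).
  by rewrite nth_mkseq // le_jd.
by rewrite !nth_default ?size_normalize_tail.
Qed.

Lemma combo_normalize_tail d B alpha :
  combo (normalize_tail d B) d alpha = combo B d alpha.
Proof.
rewrite /combo nth_normalize_tail_le //; congr (_ + _).
by apply: eq_bigr => j _; rewrite nth_normalize_tail_le // ltnW.
Qed.

Lemma normalize_tail_set_nth d B w : (d < size B)%N ->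
  normalize_tail d (set_nth 0 B d w) = set_nth 0 (normalize_tail d B) d w.
Proof.
move=> lt_d; have size_set : size (set_nth 0 B d w) = size B.
  by rewrite size_set_nth; apply/maxn_idPr.
apply: (@eq_from_nth _ 0) => [|i].
  by rewrite size_set_nth !size_normalize_tail size_set; apply/esym/maxn_idPr.
rewrite size_normalize_tail size_set => lt_i.
rewrite nth_set_nth /= !nth_mkseq ?size_set // nth_set_nth /=.
by case: eqP => [->|]; rewrite ?leqnn.
Qed.

Lemma normalize_tail_basis d B :
  basis_of fullv B -> basis_of fullv (normalize_tail d B).
Proof.
move=> B_basis; apply: (basis_scale_nth B_basis (size_normalize_tail d B)).
move=> i lt_i; rewrite nth_mkseq //; case: ifP => _.
  by exists 1; rewrite ?oner_neq0 ?scale1r.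
by exists (x ^ (- val (nth 0 B i))); rewrite ?expfz_neq0.
Qed.

Lemma normalize_tail_integral d B : basis_of fullv B ->
  (forall j, (j <= d)%N -> (j < r)%N -> 0 <= val (nth 0 B j)) ->
  all (integral val) (normalize_tail d B).
Proof.
move=> B_basis head_int; apply/(all_nthP 0) => i.
rewrite size_normalize_tail => lt_i; rewrite /integral nth_mkseq //.
case: ifP => [le_id|_]; first by rewrite head_int ?orbT -?(size_basis_full B_basis).
by rewrite val_scale_exprz ?(basis_nth_neq0 B_basis) // addNr lexx orbT.
Qed.

Lemma val_combo_gt0 B d alpha : basis_of fullv B -> (d < size B)%N ->
  vgt val (combo B d alpha) 0 -> 0 < val (combo B d alpha).
Proof. by move=> B_basis lt_d; rewrite /vgt (negPf (combo_neq0 alpha B_basis lt_d)). Qed.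

(* With the middle component, the last one pins val B_0 to 0 (the guard
   handles the empty basis); this is what makes every inner step satisfy the
   hypothesis of the discriminant axiom. *)
Definition stage_inv (s : nat * seq V) : Prop :=
  let: (d, B) := s in
  [/\ basis_of fullv B,
      forall j, (j <= d)%N -> (j < r)%N -> 0 <= val (nth 0 B j) &
      (0 < r)%N -> val (nth 0 B 0) <= 0].

Lemma stage_inv_init B0 : basis_of fullv B0 -> stage_inv (proc_init r x val B0).
Proof.
move=> B0_basis; rewrite /proc_init; case: ifP => [r_gt0|].
  have lt_0 : (0 < size B0)%N by rewrite size_basis_full.
  split; first exact: normalize_basis.
    by move=> j; rewrite leqn0 => /eqP -> _; rewrite val_normalize.
  by rewrite val_normalize.
move/negbT; rewrite -leqNgt leqn0 => /eqP r0.
by split => // [j _|]; rewrite r0.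
Qed.

Lemma stage_inv_step s s' : stage_inv s -> proc_step r x val s s' -> stage_inv s'.
Proof.
move=> + step; case: step => [d B alpha lt_dr combo_gt0 | d B lt_dr _].
  move=> [B_basis head_int B0_le0].
  have lt_d : (d < size B)%N by rewrite size_basis_full.
  have val_combo := val_combo_gt0 B_basis lt_d combo_gt0.
  have combo_ne0 := combo_neq0 alpha B_basis lt_d.
  split; first exact/basis_set_nth_combo/invr_neq0.
    move=> j le_jd lt_jr; rewrite nth_set_nth /=; case: eqP => _; last exact: head_int.
    rewrite val_fun.1 ?invr_neq0 // valuationV // nu_x; lia.
  move=> r_gt0; rewrite nth_set_nth /=; case: eqP => [d0|_]; last exact: B0_le0.
  by move: val_combo; rewrite -d0 /combo big_ord0 add0r; have := B0_le0 r_gt0; lia.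
move=> [B_basis head_int B0_le0]; case: ifP => lt_d1r.
  have lt_d1 : (d.+1 < size B)%N by rewrite size_basis_full.
  split; first exact: normalize_basis.
    move=> j; rewrite leq_eqVlt => /orP[/eqP->|lt_jd1] lt_jr.
      by rewrite val_normalize.
    by rewrite nth_set_nth /= ltn_eqF // head_int.
  by move=> r_gt0; rewrite nth_set_nth /= B0_le0.
split => // j; rewrite leq_eqVlt => /orP[/eqP->|lt_jd1] lt_jr; last exact: head_int.
by rewrite lt_jr in lt_d1r.
Qed.

Lemma stage_step_progress s s' : stage_inv s -> proc_step r x val s s' ->
  (s.1 < r)%N /\
  ((s.1 < s'.1)%N \/
   s'.1 = s.1 /\ 0 <= Disc (normalize_tail s.1 s'.2) < Disc (normalize_tail s.1 s.2)).
Proof.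
move=> inv_s step; have := stage_inv_step inv_s step; move: inv_s.
case: step => [d B alpha lt_dr combo_gt0 | d B lt_dr _] /=; last by move=> _ _; split; [|left].
move=> [B_basis _ B0_le0] [B'_basis head'_int _]; split=> //; right; split=> //.
have lt_d : (d < size B)%N by rewrite size_basis_full.
apply/andP; split.
  by apply: Disc_discr.1; [exact: normalize_tail_basis | exact: normalize_tail_integral].
rewrite normalize_tail_set_nth // -(combo_normalize_tail d B alpha).
apply: Disc_discr.2; rewrite ?size_normalize_tail //; first exact: normalize_tail_basis.
rewrite combo_normalize_tail /vgt (negPf (combo_neq0 alpha B_basis lt_d)) /=.
have min_le_B0 : \big[Num.min/val (nth 0 (normalize_tail d B) d)]_(j < d.+1)
    val (nth 0 (normalize_tail d B) j) <= val (nth 0 B 0).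
  by rewrite big_ord_recl nth_normalize_tail_le // ge_min lexx.
apply: le_lt_trans min_le_B0 (le_lt_trans (B0_le0 _) _); first exact: leq_ltn_trans lt_dr.
exact: val_combo_gt0.
Qed.

Lemma proc_no_infinite_run B0 : basis_of fullv B0 ->
  ~ (exists run : nat -> nat * seq V,
       run 0%N = proc_init r x val B0 /\
       forall n, proc_step r x val (run n) (run n.+1)).
Proof.
move=> B0_basis [run [run0 run_step]].
have inv n : stage_inv (run n).
  elim: n => [|n IHn]; first by rewrite run0; exact: stage_inv_init.
  exact: stage_inv_step IHn (run_step n).
pose stage n := (run n).1.
pose disc n := absz (Disc (normalize_tail (stage n) (run n).2)).
apply: (@no_bounded_lex_descent r stage disc) => n;
  have [lt_r progress] := stage_step_progress (inv n) (run_step n) => //.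
rewrite /disc /stage; case: progress => [|[-> Disc_lt]]; first by left.
by right; split=> //; lia.
Qed.

End Procedure.

Unset Implicit Arguments.

Theorem mainTheorem4 (k : fieldType) (V : vectType k) (r : nat)
    (nu : k -> int) (val : V -> int) (x : k) (Disc : seq V -> int) :
  \dim (fullv : {vspace V}) = r ->
  is_valuation nu ->
  (forall n : int, exists2 a : k, a != 0 & nu a = n) ->
  is_value_function nu val ->
  x != 0 -> nu x = 1 ->
  is_discriminant x val Disc ->
  forall B0 : seq V, basis_of fullv B0 ->
  ~ (exists run : nat -> nat * seq V,
       run 0%N = proc_init r x val B0 /\
       forall n : nat, proc_step r x val (run n) (run n.+1)).
Proof.
move=> dimV nu_val _ val_fun x_neq0 nu_x Disc_discr.
exact: (proc_no_infinite_run dimV nu_val val_fun x_neq0 nu_x Disc_discr).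
Qed.
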